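(* Let $n$ be sufficiently large, $m=\lceil n/\log^8 n\rceil$ and $p=1/(m^{1/2}\log^2 m)$. Let $H_R,H_B$ be graphs on vertex set $[m]$, let $H_R',H_B'$ be obtained from them by deleting every edge lying in a triangle, and let $\pi_R,\pi_B:[n]\to[m]$ be maps. Let $H_0$ be the graph on $[n]$ where distinct $u,v$ are adjacent iff $\{\pi_R(u),\pi_R(v)\}\in E(H_R')$ (then the edge is called red) or $\{\pi_B(u),\pi_B(v)\}\in E(H_B')$ (then called blue); an edge may be both. A pair $\{u,v\}\in\binom{[n]}{2}$ is closed by a red (resp. blue) cherry if there is $w\in[n]$ with $\{u,w\},\{v,w\}$ both red (resp. both blue) edges of $H_0$. If $H_R$ has maximum degree at most $2pm$ and $|\pi_R^{-1}(x)|\le 2n/m$ for all $x\in[m]$, then at most $n^2/\log n$ pairs in $\binom{[n]}2$ are closed by a red cherry in $H_0$. Similarly, if $H_B$ has maximum degree at most $2pm$ and $|\pi_B^{-1}(x)|\le 2n/m$ for all $x\in[m]$, then at most $n^2/\log n$ pairs are closed by a blue cherry in $H_0$.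
   Context: Logarithms are natural; $\log^k n$ means $(\log n)^k$. *)

From mathcomp Require Import all_boot all_order all_algebra.
From mathcomp Require Import all_classical all_reals all_analysis.
Set Implicit Arguments. Unset Strict Implicit. Unset Printing Implicit Defensive.
Import Order.TTheory GRing.Theory Num.Theory.
Local Open Scope ring_scope.

Definition is_graph (T : finType) (H : rel T) : Prop :=
  (forall x y, H x y = H y x) /\ (forall x, H x x = false).

Definition del_tri (T : finType) (H : rel T) : rel T :=
  fun x y => H x y && ~~ [exists z, H x z && H y z].

Definition degree (T : finType) (H : rel T) (x : T) : nat := #|[set y | H x y]|.

Definition m_of (R : realType) (n : nat) : nat :=
  `| Num.ceil ((n%:R : R) / (ln (n%:R : R)) ^+ 8) |%N.

Definition p_of (R : realType) (m : nat) : R :=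
  1 / (Num.sqrt (m%:R : R) * (ln (m%:R : R)) ^+ 2).

Definition col_edge (n m : nat) (Hc : rel 'I_m) (pic : 'I_n -> 'I_m) : rel 'I_n :=
  fun u v => (u != v) && del_tri Hc (pic u) (pic v).

Definition H0 (n m : nat) (HR HB : rel 'I_m) (piR piB : 'I_n -> 'I_m) : rel 'I_n :=
  fun u v => col_edge HR piR u v || col_edge HB piB u v.

(* Pairs {u,v} (encoded as u < v) closed by a cherry of the given colour. *)
Definition cherry_closed (n m : nat) (Hc : rel 'I_m) (pic : 'I_n -> 'I_m)
  : {set 'I_n * 'I_n} :=
  [set uv : 'I_n * 'I_n | (val uv.1 < val uv.2)%N &&
            [exists w, col_edge Hc pic uv.1 w && col_edge Hc pic uv.2 w]].

From mathcomp Require Import all_boot all_order all_algebra.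
From mathcomp Require Import all_classical all_reals all_analysis.
From mathcomp Require Import ring lra.
Set Implicit Arguments.
Unset Strict Implicit.

Import Order.TTheory GRing.Theory Num.Theory.
Local Open Scope ring_scope.

(* If {u, v} is closed by a cherry through w, then pi u and pi v are both
   H-neighbours of z = pi w.  Hence the number of closed pairs is at most
   the sum over z of N_z ^ 2, where N_z counts the vertices of [n] mapped
   into the neighbourhood of z.  Each N_z is at most (max degree) times
   (max fibre) <= 4pn, so the count is at most m (4pn)^2 = 16 n^2 / log^4 m,
   and log m >= (log n) / 2 makes this at most n^2 / log n.  Only the
   inclusion H' <= H is used, not the deletion of triangle edges. *)

Section CherryCount.

Variables (n m : nat) (H : rel 'I_m) (pi : 'I_n -> 'I_m).

Lemma col_edge_sub u v : col_edge H pi u v -> H (pi u) (pi v).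
Proof. by case/andP=> _ /andP[]. Qed.

Lemma card_cherry_closed_leq :
  (#|cherry_closed H pi| <= \sum_(z : 'I_m) #|[set u | H (pi u) z]| ^ 2)%N.
Proof.
have closed_le : (#|cherry_closed H pi| <=
    \sum_(uv : 'I_n * 'I_n) \sum_(z : 'I_m) (H (pi uv.1) z && H (pi uv.2) z))%N.
  rewrite -sum1_card big_mkcond /=; apply: leq_sum => uv _.
  case: ifP => // /setIdP[_ /existsP[w /andP[/col_edge_sub h1 /col_edge_sub h2]]].
  by rewrite (bigD1 (pi w)) //= h1 h2.
apply: leq_trans closed_le _; rewrite exchange_big /=; apply: leq_sum => z _.
rewrite -mulnn -cardsX -sum1_card [X in (_ <= X)%N]big_mkcond /=.
by apply: leq_sum => uv _; rewrite !inE; case: (_ && _).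
Qed.

Variables (R : realType) (D F : R).
Hypotheses (Hsym : symmetric H)
  (degH : forall x, (degree H x)%:R <= D)
  (fibre_pi : forall x, (#|[set u | pi u == x]|%:R : R) <= F).

Lemma card_preim_neighbours_le z : (#|[set u | H (pi u) z]|%:R : R) <= D * F.
Proof.
have F0 : 0 <= F by apply: le_trans (fibre_pi z).
rewrite -sum1_card (partition_big pi (H^~ z)); last by move=> u; rewrite inE.
rewrite natr_sum; apply: le_trans (_ : \sum_(x | H x z) F <= _).
  apply: ler_sum => x Hxz; apply: le_trans (fibre_pi x).
  rewrite ler_nat -sum1_card; apply: eq_leq; apply: eq_bigl => u.
  by rewrite !inE; case: (pi u =P x) => [->|]; rewrite ?Hxz ?andbF.
rewrite (eq_bigl (fun x => x \in [set y | H z y])); last by move=> x; rewrite inE Hsym.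
by rewrite sumr_const -mulr_natl; apply: ler_wpM2r => //; exact: degH.
Qed.

Lemma card_cherry_closed_le :
  (#|cherry_closed H pi|%:R : R) <= m%:R * (D * F) ^+ 2.
Proof.
apply: le_trans (_ : (\sum_z #|[set u | H (pi u) z]| ^ 2)%N%:R <= _).
  by rewrite ler_nat card_cherry_closed_leq.
rewrite natr_sum; apply: le_trans (_ : \sum_(z : 'I_m) (D * F) ^+ 2 <= _).
  apply: ler_sum => z _; rewrite natrX lerXn2r ?nnegrE ?card_preim_neighbours_le //.
  exact: le_trans (ler0n _ _) (card_preim_neighbours_le z).
by rewrite sumr_const card_ord mulr_natl.
Qed.

End CherryCount.

Section Asymptotics.

Variable R : realType.

Lemma ln_le_subr1 (x : R) : 0 < x -> ln x <= x - 1.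
Proof.
move=> x0; have := @le_ln1Dx R (x - 1).
by rewrite addrCA subrr addr0; apply; lra.
Qed.

Lemma ln2_ge_half : 2^-1 <= ln (2 : R).
Proof. by have := @ln_le_subr1 2^-1 ltac:(lra); rewrite lnV ?posrE //; lra. Qed.

Lemma ln_le_div64_add5 (x : R) : 0 < x -> ln x <= x / 64 + 5.
Proof.
move=> x0; have := @ln_le_subr1 (x / 64) ltac:(lra).
have ln64 : ln (64 : R) <= 6.
  have -> : (64 : R) = 2 ^+ 6 by rewrite -natrX.
  rewrite lnXn // -[_ *+ 6]mulr_natr.
  by have := @ln_le_subr1 2 ltac:(lra); lra.
by rewrite ln_div ?posrE //; lra.
Qed.

Lemma ln_ge_of_exp2_le (x : R) k : 2 ^+ k <= x -> k%:R / 2 <= ln x.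
Proof.
move=> pow_le_x; have pow_gt0 : (0 : R) < 2 ^+ k by rewrite exprn_gt0.
have : ln (2 ^+ k : R) <= ln x by rewrite ler_ln ?posrE ?(lt_le_trans pow_gt0 pow_le_x).
rewrite lnXn // -[_ *+ k]mulr_natr => /(le_trans _); apply.
by have := ln2_ge_half; have := ler0n R k; nra.
Qed.

Lemma ln_natr_ge200 n : (2 ^ 400 <= n)%N -> 200 <= ln (n%:R : R).
Proof.
move=> n_ge; have := @ln_ge_of_exp2_le n%:R 400.
by rewrite -natrX ler_nat => /(_ n_ge) {n_ge}; apply: le_trans; lra.
Qed.

Lemma m_of_ge n : n%:R / ln (n%:R : R) ^+ 8 <= (m_of R n)%:R.
Proof.
have ratio_ge0 : 0 <= n%:R / ln (n%:R : R) ^+ 8.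
  by rewrite divr_ge0 // exprn_even_ge0.
by rewrite /m_of natr_absz ger0_norm ?ceil_ge // real_ceil_ge0 ?num_real //; lra.
Qed.

(* ln m >= ln n - 8 ln ln n, and 8 ln ln n <= ln n / 2 once ln n >= 200. *)
Lemma ln_m_of_ge n : 200 <= ln (n%:R : R) -> ln (n%:R : R) / 2 <= ln (m_of R n)%:R.
Proof.
move=> L_ge.
have n0 : 0 < (n%:R : R).
  by rewrite ltNge; apply: contraTN L_ge => n_le0; rewrite ln0 // -ltNge; lra.
have L0 : 0 < ln (n%:R : R) by lra.
have L8 : 0 < ln (n%:R : R) ^+ 8 by rewrite exprn_gt0.
have ratio0 : 0 < n%:R / ln (n%:R : R) ^+ 8 by rewrite divr_gt0.
have ln_ratio : ln (n%:R / ln (n%:R : R) ^+ 8) <= ln (m_of R n)%:R.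
  by rewrite ler_ln ?posrE ?m_of_ge ?(lt_le_trans ratio0 (m_of_ge n)).
move: ln_ratio; rewrite (ln_div n0 L8) (lnXn 8 L0) -[_ *+ 8]mulr_natr.
by have := @ln_le_div64_add5 _ L0; lra.
Qed.

Lemma sqr_p_of_mul m : (0 < m)%N -> p_of R m ^+ 2 * m%:R = (ln (m%:R : R) ^+ 4)^-1.
Proof.
move=> m0; have m0R : 0 < (m%:R : R) by rewrite ltr0n.
rewrite /p_of expr_div_n exprMn sqr_sqrtr ?ltW // -exprM expr1n mul1r.
by rewrite invfM mulrAC mulVf ?gt_eqF // mul1r.
Qed.

Lemma mul16_le_expr4 (L a : R) : 200 <= L -> L / 2 <= a -> 16 * L <= a ^+ 4.
Proof.
move=> L_ge a_ge; have : (L / 2) ^+ 4 <= a ^+ 4 by rewrite lerXn2r ?nnegrE //; lra.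
apply: le_trans.
have L3 : 256 <= L ^+ 3.
  apply: le_trans (_ : 200 ^+ 3 <= _); first by rewrite -natrX ler_nat.
  by rewrite lerXn2r ?nnegrE //; lra.
by move: L3; rewrite !exprS expr0; nra.
Qed.

End Asymptotics.

Lemma card_cherry_closed_le_ln (R : realType) n (H : rel 'I_(m_of R n))
    (pi : 'I_n -> 'I_(m_of R n)) :
  (2 ^ 400 <= n)%N -> symmetric H ->
  (forall x, (degree H x)%:R <= 2 * p_of R (m_of R n) * (m_of R n)%:R) ->
  (forall x, (#|[set u | pi u == x]|%:R : R) <= 2 * n%:R / (m_of R n)%:R) ->
  (#|cherry_closed H pi|%:R : R) <= n%:R ^+ 2 / ln (n%:R : R).
Proof.
move=> /(ln_natr_ge200 R) L_ge Hsym degH fibre_pi.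
have lnm_ge := ln_m_of_ge L_ge.
have m0 : (0 < m_of R n)%N.
  rewrite lt0n; apply/negP => /eqP m_eq0.
  by move: lnm_ge; rewrite m_eq0 mulr0n (ln0 (lexx 0)); lra.
apply: le_trans (card_cherry_closed_le Hsym degH fibre_pi) _.
have -> : (m_of R n)%:R *
      (2 * p_of R (m_of R n) * (m_of R n)%:R * (2 * n%:R / (m_of R n)%:R)) ^+ 2
    = 16 * n%:R ^+ 2 * (p_of R (m_of R n) ^+ 2 * (m_of R n)%:R).
  by field; rewrite pnatr_eq0 -lt0n.
have L0 : 0 < ln (n%:R : R) by lra.
have a4_ge := mul16_le_expr4 L_ge lnm_ge.
rewrite sqr_p_of_mul // ler_pdivrMr; last by apply: lt_le_trans a4_ge; lra.
by rewrite mulrAC ler_pdivlMr //; have := sqr_ge0 (n%:R : R); nra.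
Qed.

Theorem lemma5p1 (R : realType) :
  exists N : nat, forall n : nat, (N <= n)%N ->
  forall m : nat, m = m_of R n ->
  forall (HR HB : rel 'I_m) (piR piB : 'I_n -> 'I_m),
    is_graph HR -> is_graph HB ->
    ((forall x, (degree HR x)%:R <= 2 * p_of R m * m%:R) ->
     (forall x : 'I_m, (#|[set u | piR u == x]|%:R : R) <= 2 * n%:R / m%:R) ->
     (#|cherry_closed HR piR|%:R : R) <= (n%:R) ^+ 2 / ln (n%:R : R))
    /\
    ((forall x, (degree HB x)%:R <= 2 * p_of R m * m%:R) ->
     (forall x : 'I_m, (#|[set u | piB u == x]|%:R : R) <= 2 * n%:R / m%:R) ->
     (#|cherry_closed HB piB|%:R : R) <= (n%:R) ^+ 2 / ln (n%:R : R)).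
Proof.
exists (2 ^ 400)%N => n n_ge m -> HR HB piR piB [HR_sym _] [HB_sym _].
by split; [exact: card_cherry_closed_le_ln n_ge HR_sym
          | exact: card_cherry_closed_le_ln n_ge HB_sym].
Qed.
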